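(* Let $V$ be a topological real vector space and $f:V\to\mathbb{R}$ a non-negative function that is positively homogeneous ($f(\lambda x)=\lambda f(x)$ for all $x\in V$, $\lambda>0$). Then for any real number $\alpha>1$ the following are equivalent: (1) $f$ is continuous and $f^{\alpha}$ is strictly convex. (2) $f$ is continuous and strictly quasi-convex. (3) $f$ is strictly sub-convex and $f^{-1}(0)=\{0\}$.
   Context: Topological real vector spaces are not assumed Hausdorff. A function $g$ on a convex set $C$ is strictly convex if $g((1-t)x+ty)<(1-t)g(x)+tg(y)$ for all distinct $x,y\in C$, $t\in(0,1)$; it is strictly quasi-convex if $g((1-t)x+ty)<\max\{g(x),g(y)\}$ for all distinct $x,y\in C$, $t\in(0,1)$. For $f:C\to\mathbb{R}$ and $r\in\mathbb{R}$, $S_r(f)=\{x\in C: f(x)\le r\}$. For a subset $S$, $\mathrm{Aff}(S)$ is its affine hull; $\mathrm{ri}(S)$ and $\mathrm{rc}(S)$ are the interior and closure of $S$ in the subspace topology of $\mathrm{Aff}(S)$. $]x,y[=\{(1-t)x+ty: t\in[0,1]\}\setminus\{x,y\}$. A subset $C$ is strictly convex if for any two distinct $x,y\in\mathrm{rc}(C)$ one has $]x,y[\subseteq\mathrm{ri}(C)$. A function $f:C\to\mathbb{R}$ is strictly sub-convex if $S_r(f)$ is strictly convex for every $r\in\mathbb{R}$. *)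

From HB Require Import structures.
From mathcomp Require Import all_boot all_order all_algebra.
From mathcomp Require Import all_classical all_reals all_analysis.
Set Implicit Arguments.
Unset Strict Implicit.
Unset Printing Implicit Defensive.
Import Order.TTheory GRing.Theory Num.Theory.
Import numFieldTopology.Exports.
Local Open Scope classical_set_scope.
Local Open Scope ring_scope.

Section Defs.
Variables (R : realType) (V : topologicalLmodType R).

Definition strictly_convex_fun (g : V -> R) : Prop :=
  forall (x y : V) (t : R), x <> y -> 0 < t -> t < 1 ->
    g ((1 - t) *: x + t *: y) < (1 - t) * g x + t * g y.

Definition strictly_quasi_convex_fun (g : V -> R) : Prop :=
  forall (x y : V) (t : R), x <> y -> 0 < t -> t < 1 ->
    g ((1 - t) *: x + t *: y) < Num.max (g x) (g y).

Definition sublevel (f : V -> R) (r : R) : set V := [set x | f x <= r].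

Definition aff_hull (S : set V) : set V :=
  [set x | exists (n : nat) (p : 'I_n -> V) (w : 'I_n -> R),
     (forall i, S (p i)) /\ \sum_(i < n) w i = 1 /\
     x = \sum_(i < n) w i *: p i].

(* relative interior: interior of S in the subspace topology of Aff(S) *)
Definition rel_interior (S : set V) : set V :=
  [set x | aff_hull S x /\
     exists U : set V, open U /\ U x /\ U `&` aff_hull S `<=` S].

(* relative closure: closure of S in the subspace topology of Aff(S) *)
Definition rel_closure (S : set V) : set V :=
  [set x | aff_hull S x /\
     forall U : set V, open U -> U x -> U `&` S !=set0].

Definition open_segment (x y : V) : set V :=
  [set z | (exists2 t : R, 0 <= t <= 1 & z = (1 - t) *: x + t *: y)
           /\ z <> x /\ z <> y].

Definition strictly_convex_set (C : set V) : Prop :=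
  forall x y : V, rel_closure C x -> rel_closure C y -> x <> y ->
    open_segment x y `<=` rel_interior C.

Definition strictly_subconvex (f : V -> R) : Prop :=
  forall r : R, strictly_convex_set (sublevel f r).

Definition pos_homogeneous (f : V -> R) : Prop :=
  forall (x : V) (l : R), 0 < l -> f (l *: x) = l * f x.

End Defs.

From HB Require Import structures.
From mathcomp Require Import all_boot all_order all_algebra.
From mathcomp Require Import all_classical all_reals all_analysis.
From mathcomp Require Import ring lra.
Set Implicit Arguments.
Unset Strict Implicit.
Unset Printing Implicit Defensive.
Import Order.TTheory GRing.Theory Num.Theory.
Import numFieldTopology.Exports.
Local Open Scope classical_set_scope.
Local Open Scope ring_scope.

(* A non-negative positively homogeneous f is the gauge of its unit sublevel
   set, so quasi-convexity already makes it subadditive and hence convex;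
   composing with the strictly convex increasing map s |-> s ^ alpha on [0, +oo)
   gives (2) -> (1), while (1) -> (2) only uses monotonicity of s |-> s ^ alpha.
   For (2) -> (3), continuity makes S_r closed and {f < r} open, and strict
   quasi-convexity puts every open segment of S_r into {f < r}.  Conversely,
   when f vanishes only at 0, every S_r with r > 0 has the whole space as affine
   hull, so its relative interior is an interior: pushing a point of ]x,y[
   slightly outwards along its ray stays in S_r, which forces f < r on ]x,y[,
   and 0, lying on the segment between the two points of S_1 on the line
   through any x != 0, is an interior point of S_1.  Together with
   subadditivity this bound near 0 gives continuity. *)

Section PowRStrictConvexity.
Variable R : realType.

Lemma expR_conv_lt (L b : R) : L != 0 -> 0 < b < 1 ->
  expR (b * L) < b * expR L + (1 - b).
Proof.
move=> L0 /andP[b0 b1]; set m := b * L.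
have m0 : m != 0 by rewrite mulf_neq0 // gt_eqF.
have Lm0 : L - m != 0.
  by rewrite /m -{1}(mul1r L) -mulrBl mulf_neq0 // subr_eq0 gt_eqF.
have tangentL : expR m * (1 + (L - m)) < expR L.
  by rewrite -[X in _ < expR X](subrK m) expRD mulrC ltr_pM2r ?expR_gt0 ?expR_gt1Dx.
have tangent0 : expR m * (1 + (0 - m)) < 1.
  rewrite -[ltRHS](expR0 R) -[X in _ < expR X](subrK m) expRD mulrC ltr_pM2r ?expR_gt0 //.
  by rewrite expR_gt1Dx // sub0r oppr_eq0.
have -> : expR m = b * (expR m * (1 + (L - m))) + (1 - b) * (expR m * (1 + (0 - m))).
  by rewrite /m; ring.
rewrite -[X in _ < _ + X]mulr1; apply: ltrD; rewrite ltr_pM2l ?subr_gt0 //.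
Qed.

Lemma powR_bernoulli_lt (al u : R) : 1 < al -> 0 <= u -> u != 1 ->
  1 + al * (u - 1) < u `^ al.
Proof.
move=> al1 u0 u1; have al0 : 0 < al by lra.
have [->|u_neq0] := eqVneq u 0; first by rewrite powR0 ?gt_eqF //; lra.
have u_gt0 : 0 < u by rewrite lt_neqAle eq_sym u_neq0.
(* strict convexity of [expR] between [0] and [al * ln u], with weight [al^-1] *)
have lnu0 : al * ln u != 0 by rewrite mulf_neq0 ?ln_eq0 // gt_eqF.
have ial : 0 < al^-1 < 1 by rewrite invr_gt0 al0 invf_lt1.
have := expR_conv_lt lnu0 ial.
rewrite mulrA mulVf ?gt_eqF // mul1r lnK ?posrE //.
have -> : expR (al * ln u) = u `^ al by rewrite /powR (negbTE u_neq0).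
rewrite -(ltr_pM2l al0) mulrDr mulrA mulfV ?gt_eqF // mul1r.
rewrite mulrBr mulr1 mulfV ?gt_eqF //; lra.
Qed.

Lemma powR_tangent_lt (al m s : R) : 1 < al -> 0 < m -> 0 <= s -> s != m ->
  m `^ al + al * m `^ al / m * (s - m) < s `^ al.
Proof.
move=> al1 m0 s0 sm; have m_neq0 := lt0r_neq0 m0.
have u1 : s / m != 1.
  by apply: contra sm => /eqP sm1; rewrite -(divfK m_neq0 s) sm1 mul1r.
have := powR_bernoulli_lt al1 (divr_ge0 s0 (ltW m0)) u1.
rewrite -(ltr_pM2l (powR_gt0 al m0)) -powRM ?divr_ge0 ?(ltW m0) //.
rewrite [m * (s / m)]mulrCA mulfV // mulr1.
suff -> : m `^ al + al * m `^ al / m * (s - m) = m `^ al * (1 + al * (s / m - 1)) by [].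
by field.
Qed.

Lemma powR_conv_lt (al a b t : R) : 1 < al -> 0 <= a -> 0 <= b -> a != b ->
  0 < t < 1 -> ((1 - t) * a + t * b) `^ al < (1 - t) * a `^ al + t * b `^ al.
Proof.
move=> al1 a0 b0 ab /andP[t0 t1]; have t1' : 0 < 1 - t by rewrite subr_gt0.
set m := (1 - t) * a + t * b.
have m0 : 0 < m.
  have [a_lt_b|b_lt_a|a_eq_b] := ltgtP a b; last by rewrite a_eq_b eqxx in ab.
  - by rewrite /m; nra.
  - by rewrite /m; nra.
have a_neq_m : a != m.
  rewrite -subr_eq0 (_ : a - m = t * (a - b)); last by rewrite /m; ring.
  by rewrite mulf_neq0 ?(lt0r_neq0 t0) // subr_eq0.
have b_neq_m : b != m.
  rewrite -subr_eq0 (_ : b - m = (1 - t) * (b - a)); last by rewrite /m; ring.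
  by rewrite mulf_neq0 ?(lt0r_neq0 t1') // subr_eq0 eq_sym.
(* average the two strict tangent-line inequalities at [m] *)
set K := al * m `^ al / m.
have -> : m `^ al = (1 - t) * (m `^ al + K * (a - m)) + t * (m `^ al + K * (b - m)).
  by rewrite /m; ring.
by apply: ltrD; rewrite ltr_pM2l // powR_tangent_lt.
Qed.

End PowRStrictConvexity.

Section TopologicalLmodule.
Variables (R : realType) (V : topologicalLmodType R).

Lemma near_scale_subr (x : V) (c : R) (U : set V) :
  nbhs 0 U -> \forall y \near x, U (c *: (y - x)).
Proof.
apply: (_ : (fun y => c *: (y - x)) @ x --> (0 : V)).
rewrite -(scaler0 _ c) -(subrr x).
apply: (@continuous_comp V (R^o * V)%type V (fun y => (c, y - x)) (fun z => z.1 *: z.2));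
  last exact: scale_continuous.
apply: (@cvg_pair _ _ _ _ (nbhs (c : R^o))); first exact: cvg_cst.
apply: (@continuous_comp V (V * V)%type V (fun y => (y, x)) (fun z => z.1 - z.2));
  last exact: sub_continuous.
by apply: (@cvg_pair _ _ _ _ (nbhs x)); [exact: cvg_id | exact: cvg_cst].
Qed.

Lemma nbhs_scale_gt1 (z : V) (U : set V) : nbhs z U -> exists2 l : R, 1 < l & U (l *: z).
Proof.
move=> Uz.
have : (fun l : R^o => l *: z) @ (1 : R^o) --> z.
  rewrite -[X in _ --> X]scale1r.
  apply: (@continuous_comp R^o (R^o * V)%type V (fun l => (l, z)) (fun p => p.1 *: p.2));
    last exact: scale_continuous.
  by apply: (@cvg_pair _ _ _ _ (nbhs (1 : R^o))); [exact: cvg_id | exact: cvg_cst].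
move=> /(_ _ Uz) /nbhs_ballP [e /= e0 Ue].
exists (1 + e / 2); first by rewrite ltrDl divr_gt0.
apply: Ue; rewrite -ball_normE /= opprD addrA subrr sub0r normrN ger0_norm ?divr_ge0 ?ltW //.
by rewrite ltr_pdivrMr // ltr_pMr // ltr1n.
Qed.

Lemma aff_hull_self (S : set V) : S `<=` aff_hull S.
Proof.
move=> w Sw; exists 1%N, (fun _ => w), (fun _ => 1).
by rewrite !big_ord1 scale1r.
Qed.

Lemma rel_closure_self (S : set V) : S `<=` rel_closure S.
Proof. by move=> x Sx; split; [exact: aff_hull_self | move=> U _ Ux; exists x]. Qed.

Lemma open_segment_conv (x y : V) (t : R) : x <> y -> 0 < t -> t < 1 ->
  open_segment x y ((1 - t) *: x + t *: y).
Proof.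
move=> xy t0 t1; split; first by exists t; rewrite ?ltW.
split => /eqP; rewrite -subr_eq0.
- have -> : (1 - t) *: x + t *: y - x = t *: (y - x).
    by rewrite scalerBl scale1r scalerBr addrAC [x - _]addrC addrK addrC.
  by rewrite scaler_eq0 gt_eqF //= subr_eq0 => /eqP/esym.
- have -> : (1 - t) *: x + t *: y - y = (1 - t) *: (x - y).
    by rewrite scalerBr scalerBl scale1r scalerBl scale1r opprB addrA.
  by rewrite scaler_eq0 subr_eq0 (gt_eqF t1) /= subr_eq0 => /eqP.
Qed.

Lemma open_segmentP (x y z : V) : open_segment x y z ->
  exists t : R, [/\ 0 < t, t < 1 & z = (1 - t) *: x + t *: y].
Proof.
move=> [[t /andP[t0 t1] ->] [zx zy]]; exists t; split => //.
- rewrite lt_neqAle t0 andbT; apply: contra_not_neq zx => <-.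
  by rewrite subr0 scale1r scale0r addr0.
- rewrite lt_neqAle t1 andbT; apply: contra_not_neq zy => ->.
  by rewrite subrr scale0r add0r scale1r.
Qed.

Definition quasi_convex_fun (g : V -> R) : Prop :=
  forall (x y : V) (t : R), 0 < t -> t < 1 ->
    g ((1 - t) *: x + t *: y) <= Num.max (g x) (g y).

Lemma strictly_quasi_convexW (g : V -> R) :
  strictly_quasi_convex_fun g -> quasi_convex_fun g.
Proof.
move=> g_sqc x y t t0 t1; have [->|xy] := eqVneq x y.
  by rewrite -scalerDl subrK scale1r maxxx.
by apply/ltW/g_sqc => //; exact/eqP.
Qed.

Lemma strictly_convex_powR_strictly_quasi_convex (g : V -> R) (al : R) : 1 < al ->
  (forall x, 0 <= g x) -> strictly_convex_fun (fun x => g x `^ al) ->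
  strictly_quasi_convex_fun g.
Proof.
move=> al1 g_ge0 g_sc x y t xy t0 t1.
set m := Num.max (g x) (g y).
have gxm : g x <= m by rewrite le_max lexx.
have gym : g y <= m by rewrite le_max lexx orbT.
have powR_le a b : 0 <= a -> a <= b -> a `^ al <= b `^ al.
  by move=> a0 ab; apply: ge0_ler_powR; rewrite ?nnegrE ?(le_trans a0 ab) //; lra.
rewrite ltNge; apply/negP => /(powR_le _ _ (le_trans (g_ge0 x) gxm)) mz.
have := g_sc x y t xy t0 t1; rewrite ltNge => /negP; apply; apply: le_trans mz.
have -> : m `^ al = (1 - t) * m `^ al + t * m `^ al by ring.
by apply: lerD; apply: ler_wpM2l; first [lra | exact: powR_le].
Qed.

Lemma rel_closure_sublevel (g : V -> R) (r : R) :
  continuous g -> rel_closure (sublevel g r) `<=` sublevel g r.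
Proof.
move=> g_cont x [_ xcl]; rewrite /sublevel /= leNgt; apply/negP => rx.
have gt_open : open (g @^-1` [set s | r < s]).
  by move/continuousP: g_cont; apply; exact: open_gt.
have [w [/= rw]] := xcl _ gt_open rx; rewrite /sublevel /=; lra.
Qed.

Lemma sublevel_lt_rel_interior (g : V -> R) (r : R) (z : V) :
  continuous g -> g z < r -> rel_interior (sublevel g r) z.
Proof.
move=> g_cont gz; split; first by apply: aff_hull_self; exact: ltW.
exists (g @^-1` [set s | s < r]); split; first by move/continuousP: g_cont; apply; exact: open_lt.
by split => // w [/= ?] _; exact: ltW.
Qed.

Lemma strictly_quasi_convex_strictly_subconvex (g : V -> R) : continuous g ->
  strictly_quasi_convex_fun g -> strictly_subconvex g.
Proof.
move=> g_cont g_sqc r x y xcl ycl xy z /open_segmentP[t [t0 t1 ->]].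
apply: sublevel_lt_rel_interior => //; apply: (lt_le_trans (g_sqc x y t xy t0 t1)).
by rewrite ge_max !rel_closure_sublevel.
Qed.

End TopologicalLmodule.

Section PosHomogeneous.
Variables (R : realType) (V : topologicalLmodType R) (f : V -> R).
Hypotheses (f_ge0 : forall x, 0 <= f x) (f_hom : pos_homogeneous f).

Lemma pos_homogeneous0 : f 0 = 0.
Proof. by have := f_hom 0 (ltr0n R 2); rewrite scaler0; lra. Qed.

Lemma preimage0P : f @^-1` [set 0] = [set 0] <-> forall x, f x = 0 -> x = 0.
Proof.
split=> [f0 x fx|f_eq0]; first by have : (f @^-1` [set 0]) x by []; rewrite f0.
by apply/seteqP; split=> x /=; [exact: f_eq0 | move=> ->; exact: pos_homogeneous0].
Qed.

Lemma quasi_convex_subadditive : quasi_convex_fun f ->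
  forall x y, f (x + y) <= f x + f y.
Proof.
move=> f_qc x y; apply/ler_addgt0Pr => e e0; have e2 : 0 < e / 2 by rewrite divr_gt0.
(* [x + y] is [a + b] times a convex combination of [x / a] and [y / b], both in
   the unit sublevel set; the slack [e] keeps [a] and [b] positive *)
set a := f x + e / 2; set b := f y + e / 2.
have a0 : 0 < a by rewrite /a; have := f_ge0 x; lra.
have b0 : 0 < b by rewrite /b; have := f_ge0 y; lra.
have ab0 : 0 < a + b by rewrite addr_gt0.
set t := b / (a + b).
have t0 : 0 < t by rewrite divr_gt0.
have t1 : t < 1 by rewrite ltr_pdivrMr // mul1r ltrDr.
have -> : x + y = (a + b) *: ((1 - t) *: (a^-1 *: x) + t *: (b^-1 *: y)).
  rewrite scalerDr !scalerA.
  have -> : (a + b) * (1 - t) * a^-1 = 1 by rewrite /t; field; rewrite !gt_eqF.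
  have -> : (a + b) * t * b^-1 = 1 by rewrite /t; field; rewrite !gt_eqF.
  by rewrite !scale1r.
have unit_le1 : f ((1 - t) *: (a^-1 *: x) + t *: (b^-1 *: y)) <= 1.
  apply: le_trans (f_qc _ _ _ t0 t1) _.
  by rewrite ge_max !f_hom ?invr_gt0 // !ler_pdivrMl // !mulr1 /a /b; lra.
rewrite f_hom //; apply: le_trans (ler_wpM2l (ltW ab0) unit_le1) _.
by rewrite mulr1 /a /b; lra.
Qed.

Lemma quasi_convex_convex : quasi_convex_fun f ->
  forall (x y : V) (t : R), 0 < t -> t < 1 ->
    f ((1 - t) *: x + t *: y) <= (1 - t) * f x + t * f y.
Proof.
move=> f_qc x y t t0 t1; apply: le_trans (quasi_convex_subadditive f_qc _ _) _.
by rewrite !f_hom // subr_gt0.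
Qed.

Lemma strictly_quasi_convex_powR_strictly_convex (al : R) : 1 < al ->
  strictly_quasi_convex_fun f -> strictly_convex_fun (fun x => f x `^ al).
Proof.
move=> al1 f_sqc x y t xy t0 t1 /=; have al0 : 0 < al by lra.
have [fxy|fxy] := eqVneq (f x) (f y).
- have := f_sqc x y t xy t0 t1; rewrite fxy maxxx => /(gt0_ltr_powR al0).
  rewrite !nnegrE !f_ge0 => /(_ isT isT) /lt_le_trans; apply.
  by rewrite -mulrDl subrK mul1r.
- apply: le_lt_trans (powR_conv_lt al1 (f_ge0 x) (f_ge0 y) fxy _); last by rewrite t0.
  apply: ge0_ler_powR; rewrite ?nnegrE ?f_ge0 ?(ltW al0) //.
    by apply: addr_ge0; apply: mulr_ge0; rewrite ?f_ge0 //; lra.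
  exact: quasi_convex_convex (strictly_quasi_convexW f_sqc) _ _ _ t0 t1.
Qed.

Lemma strictly_quasi_convex_eq0 : strictly_quasi_convex_fun f ->
  forall x, f x = 0 -> x = 0.
Proof.
move=> f_sqc x fx0; apply/eqP/negPn/negP => x_neq0.
have x2x : 0 <> 2 *: x.
  by move/esym/eqP; rewrite scaler_eq0 (negbTE x_neq0) orbF pnatr_eq0.
have half0 : 0 < 2^-1 :> R by rewrite invr_gt0.
have half1 : 2^-1 < 1 :> R by rewrite invf_lt1 // ltr1n.
have := f_sqc 0 (2 *: x) 2^-1 x2x half0 half1.
rewrite scaler0 add0r scalerA mulVf ?pnatr_eq0 // scale1r fx0 pos_homogeneous0.
by rewrite f_hom ?ltr0n // fx0 mulr0 maxxx ltxx.
Qed.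

Lemma subadditive_continuous : (forall x y, f (x + y) <= f x + f y) ->
  nbhs (0 : V) (sublevel f 1) -> continuous f.
Proof.
move=> f_subadd f1 x; apply/cvgrPdist_le => e e0.
have small u : sublevel f 1 (e^-1 *: u) -> f u <= e.
  by rewrite /sublevel /= f_hom ?invr_gt0 // ler_pdivrMl // mulr1.
near=> y.
have fyx : f (y - x) <= e by apply: small; near: y; exact: near_scale_subr.
have fxy : f (x - y) <= e.
  apply: small; near: y; apply: filterS (near_scale_subr x (- e^-1) f1) => y.
  by rewrite scaleNr -scalerN opprB.
have := f_subadd (y - x) x; have := f_subadd (x - y) y; rewrite !subrK.
by rewrite ler_norml; lra.
Unshelve. all: by end_near.
Qed.

Lemma aff_hull_sublevel (r : R) (w : V) : 0 < r -> aff_hull (sublevel f r) w.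
Proof.
move=> r0; set c := r / (f w + 1).
have fw1 : 0 < f w + 1 by have := f_ge0 w; lra.
have c0 : 0 < c by rewrite divr_gt0.
(* [w] is the affine combination [c^-1 (c w) + (1 - c^-1) 0] of two points of [S_r] *)
exists 2%N, (fun i : 'I_2 => if i == ord0 then c *: w else 0),
  (fun i : 'I_2 => if i == ord0 then c^-1 else 1 - c^-1); split.
  move=> i; case: (i == ord0); rewrite /sublevel /=; last by rewrite pos_homogeneous0 ltW.
  by rewrite f_hom // /c mulrAC ler_pdivrMr // ler_pM2l //; lra.
rewrite !big_ord_recl !big_ord0 /=; split; first by rewrite addr0 addrC subrK.
by rewrite scaler0 !addr0 scalerA mulVf ?gt_eqF // scale1r.
Qed.

Lemma rel_interior_sublevel_nbhs (r : R) (z : V) : 0 < r ->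
  rel_interior (sublevel f r) z -> nbhs z (sublevel f r).
Proof.
move=> r0 [_ [U [oU [Uz US]]]]; apply: filterS (open_nbhs_nbhs (conj oU Uz)).
by move=> w Uw; apply: US; split => //; exact: aff_hull_sublevel.
Qed.

Lemma rel_interior_sublevel_lt (r : R) (z : V) : 0 < r ->
  rel_interior (sublevel f r) z -> f z < r.
Proof.
move=> r0 /(rel_interior_sublevel_nbhs r0) /nbhs_scale_gt1[l l1].
by rewrite /sublevel /= f_hom; [have := f_ge0 z; nra | lra].
Qed.

Hypothesis f_eq0 : forall x, f x = 0 -> x = 0.

Lemma strictly_subconvex_strictly_quasi_convex :
  strictly_subconvex f -> strictly_quasi_convex_fun f.
Proof.
move=> f_ssc x y t xy t0 t1; set r := Num.max (f x) (f y).
have r0 : 0 < r.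
  rewrite lt_max !lt0r !f_ge0 !andbT; apply: contra_notT xy.
  by rewrite negb_or !negbK => /andP[/eqP/f_eq0 -> /eqP/f_eq0 ->].
apply: rel_interior_sublevel_lt r0 _.
apply: (f_ssc r x y) => //; last exact: open_segment_conv.
- by apply: rel_closure_self; rewrite /sublevel /= le_max lexx.
- by apply: rel_closure_self; rewrite /sublevel /= le_max lexx orbT.
Qed.

Lemma strictly_subconvex_nbhs0 : strictly_subconvex f -> nbhs (0 : V) (sublevel f 1).
Proof.
move=> f_ssc; have [[x x_neq0]|] := pselect (exists x : V, x != 0); last first.
  move=> V0; apply: filterS filterT => w _.
  have -> : w = 0 by apply/eqP/negPn/negP => w0; apply: V0; exists w.
  by rewrite /sublevel /= pos_homogeneous0.
have f_gt0 u : u != 0 -> 0 < f u.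
  by move=> u0; rewrite lt0r f_ge0 andbT; apply: contra u0 => /eqP/f_eq0 ->.
(* [0] lies on the open segment between the points [p] and [q] of [S_1] on the
   line through [x] *)
set P := f x; set Q := f (- x).
have P0 : 0 < P := f_gt0 _ x_neq0.
have Q0 : 0 < Q by apply: f_gt0; rewrite oppr_eq0.
set p := P^-1 *: x; set q := Q^-1 *: - x.
have pq : p <> q.
  move=> /eqP; rewrite -subr_eq0 /p /q scalerN opprK -scalerDl scaler_eq0.
  by rewrite (negbTE x_neq0) orbF gt_eqF // addr_gt0 ?invr_gt0.
set t := Q / (P + Q).
have t0 : 0 < t by rewrite divr_gt0 ?addr_gt0.
have t1 : t < 1 by rewrite ltr_pdivrMr ?addr_gt0 // mul1r ltrDr.
have pq0 : (1 - t) *: p + t *: q = 0.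
  rewrite /p /q !scalerA scalerN -scaleNr -scalerDl.
  suff -> : (1 - t) * P^-1 + - (t * Q^-1) = 0 by rewrite scale0r.
  by rewrite /t; field; rewrite !gt_eqF ?addr_gt0.
have unit_sublevel u : 0 < f u -> rel_closure (sublevel f 1) ((f u)^-1 *: u).
  move=> fu0; apply: rel_closure_self.
  by rewrite /sublevel /= f_hom ?invr_gt0 // mulVf ?gt_eqF.
apply: rel_interior_sublevel_nbhs ltr01 _.
rewrite -pq0; apply: (f_ssc 1 _ _ (unit_sublevel _ P0) (unit_sublevel _ Q0) pq).
exact: open_segment_conv.
Qed.

End PosHomogeneous.

Theorem mainTheorem3 (R : realType) (V : topologicalLmodType R) (f : V -> R)
  (f_ge0 : forall x, 0 <= f x) (f_hom : pos_homogeneous f)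
  (alpha : R) (alpha_gt1 : 1 < alpha) :
  ((continuous f /\ strictly_convex_fun (fun x => f x `^ alpha)) <->
   (continuous f /\ strictly_quasi_convex_fun f)) /\
  ((continuous f /\ strictly_quasi_convex_fun f) <->
   (strictly_subconvex f /\ f @^-1` [set 0] = [set 0])).
Proof.
split; split.
- move=> [f_cont f_sc]; split => //.
  exact: strictly_convex_powR_strictly_quasi_convex alpha_gt1 f_ge0 f_sc.
- move=> [f_cont f_sqc]; split => //; exact: strictly_quasi_convex_powR_strictly_convex.
- move=> [f_cont f_sqc]; split; first exact: strictly_quasi_convex_strictly_subconvex.
  by apply/preimage0P => //; exact: strictly_quasi_convex_eq0.
- move=> [f_ssc /(preimage0P f_hom) f_eq0].
  have f_sqc : strictly_quasi_convex_fun f by exact: strictly_subconvex_strictly_quasi_convex.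
  split => //; apply: subadditive_continuous => //.
    exact/quasi_convex_subadditive/strictly_quasi_convexW.
  exact: strictly_subconvex_nbhs0.
Qed.
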